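(* Let $\nu$ be a probability distribution on $\mathbb N_0$ and ${\mathbf T}$ a thinning matrix, and put $\nu'=\nu{\mathbf T}$. Let ${\mathbf Q}$ be a condensation matrix such that $\nu'_k{\mathbf Q}_{k,n}=\nu_n{\mathbf T}_{n,k}$ for all $k,n\in\mathbb N_0$. Then for all $n,k,i,j\in\mathbb N_0$ with $j\ge n$, $i\le j$, $i\le n$ and $\nu_n>0$, $${\mathbf T}_{n,i}{\mathbf Q}_{i,j}{\mathbf T}_{j,k}{\mathbf Q}_{k,n}={\mathbf T}_{n,k}{\mathbf Q}_{k,j}{\mathbf T}_{j,i}{\mathbf Q}_{i,n}.$$
   Context: A thinning matrix is a stochastic matrix ${\mathbf T}$ on $\mathbb N_0$ with ${\mathbf T}_{n,k}=0$ for $k>n$. A condensation matrix is a stochastic matrix ${\mathbf Q}$ on $\mathbb N_0$ with ${\mathbf Q}_{k,n}=0$ for $k>n$. $(\nu{\mathbf T})_k=\sum_n\nu_n{\mathbf T}_{n,k}$. *)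

From Stdlib Require Import Reals Lra Lia.
From Coquelicot Require Import Coquelicot.
Open Scope R_scope.

Definition prob_dist (nu : nat -> R) : Prop :=
  (forall n, 0 <= nu n) /\ is_series nu 1.

Definition stochastic (M : nat -> nat -> R) : Prop :=
  (forall i j, 0 <= M i j) /\ (forall i, is_series (M i) 1).

Definition thinning (T : nat -> nat -> R) : Prop :=
  stochastic T /\ (forall n k, (n < k)%nat -> T n k = 0).

Definition condensation (Q : nat -> nat -> R) : Prop :=
  stochastic Q /\ (forall k n, (n < k)%nat -> Q k n = 0).

Definition vecmat (nu : nat -> R) (T : nat -> nat -> R) (k : nat) : R :=
  Series (fun n => nu n * T n k).

(* Multiplying by nu_n and applying the balance relation nu'_k Q_{k,n} = nu_n T_{n,k}
   twice on each side turns both products into nu_j T_{j,i} T_{j,k} Q_{i,n} Q_{k,n},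
   which is symmetric in i and k. *)
From Stdlib Require Import Reals Lra.
From Coquelicot Require Import Coquelicot.
Open Scope R_scope.

Section DetailedBalance.

Variables (nu nu' : nat -> R) (T Q : nat -> nat -> R).
Hypothesis balance : forall k n, nu' k * Q k n = nu n * T n k.

Lemma balance_cycle (n k i j : nat) :
  nu n * (T n i * Q i j * T j k * Q k n) = nu j * T j i * T j k * Q i n * Q k n.
Proof.
  replace (nu n * (T n i * Q i j * T j k * Q k n))
    with (nu n * T n i * Q i j * T j k * Q k n) by ring.
  rewrite <- balance.
  replace (nu' i * Q i n * Q i j * T j k * Q k n)
    with (nu' i * Q i j * T j k * Q i n * Q k n) by ring.
  now rewrite balance.
Qed.

Lemma balance_cycle_reverse (n k i j : nat) (nu_n_pos : 0 < nu n) :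
  T n i * Q i j * T j k * Q k n = T n k * Q k j * T j i * Q i n.
Proof.
  apply (Rmult_eq_reg_l (nu n)); [| lra].
  rewrite !balance_cycle.
  ring.
Qed.

End DetailedBalance.

Theorem mainTheorem3 (nu : nat -> R) (T Q : nat -> nat -> R) :
  prob_dist nu -> thinning T -> condensation Q ->
  (forall k n, vecmat nu T k * Q k n = nu n * T n k) ->
  forall n k i j : nat,
    (n <= j)%nat -> (i <= j)%nat -> (i <= n)%nat -> 0 < nu n ->
    T n i * Q i j * T j k * Q k n = T n k * Q k j * T j i * Q i n.
Proof.
  intros _ _ _ balance n k i j _ _ _ nu_n_pos.
  exact (balance_cycle_reverse nu (vecmat nu T) T Q balance n k i j nu_n_pos).
Qed.
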